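(* Let $D$ be a finite set of values, and let $Y$ and $Z$ be finite sets of variables with $Y \cap Z = \emptyset$. Let $w \colon \overline{D^{Y\cup Z}} \to \mathbb{R}$ be a subset-monotone ranking function. Let $R \subseteq \overline{D^Y}$ and $S \subseteq \overline{D^Z}$. If $\tau$ is a maximal element of $R$ with respect to $w$ and $\sigma$ is a maximal element of $S$ with respect to $w$, then $\tau \times \sigma$ is a maximal element of $R \wedge S = \{\tau' \times \sigma' \mid \tau' \in R,\ \sigma' \in S\}$ with respect to $w$.
   Context: For finite sets $D$ (values) and $X$ (variables), a partial assignment is a map $\nu \colon X \to D \cup \{\bot\}$, where $\bot$ means ''undefined''; $\overline{D^X}$ denotes the set of partial assignments. Two partial assignments $\tau \in \overline{D^Y}$, $\sigma \in \overline{D^Z}$ with $Y\cap Z=\emptyset$ are disjoint, and $\tau\times\sigma \in \overline{D^{Y\cup Z}}$ is the partial assignment agreeing with $\tau$ on $Y$ and with $\sigma$ on $Z$. A $(D,X)$-ranking function is a function $w \colon \overline{D^X}\to\mathbb{R}$; for $Y \subseteq X$ and $\tau \in \overline{D^Y}$, $w(\tau)$ means $w$ applied to $\tau$ extended by assigning $\bot$ to every variable of $X\setminus Y$. $w$ is subset-monotone if for every $Y \subseteq X$, every $\tau_1,\tau_2 \in \overline{D^Y}$ with $w(\tau_1)\le w(\tau_2)$, and every $\sigma \in \overline{D^{X\setminus Y}}$, we have $w(\sigma\times\tau_1)\le w(\sigma\times\tau_2)$. An element $\tau$ of a set $R$ of partial assignments is maximal with respect to $w$ if $w(\tau') \le w(\tau)$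 for every $\tau' \in R$. *)

From HB Require Import structures.
From mathcomp Require Import all_boot all_order all_algebra.
From mathcomp Require Import reals.
Set Implicit Arguments. Unset Strict Implicit. Unset Printing Implicit Defensive.
Import Order.TTheory GRing.Theory Num.Theory.
Local Open Scope ring_scope.

(* Partial assignments over the ambient variable set X with values in D:
   maps X -> D ∪ {⊥}, with ⊥ = None. *)
Definition passign (D X : finType) := {ffun X -> option D}.

(* nu is a partial assignment over Y (extended by ⊥ outside Y), i.e. an
   element of \overline{D^Y} viewed inside \overline{D^X}. *)
Definition pa_on (D X : finType) (Y : {set X}) (nu : passign D X) : Prop :=
  forall x, x \notin Y -> nu x = None.

Definition pa_prod (D X : finType) (Y : {set X}) (tau sigma : passign D X)
  : passign D X := [ffun x => if x \in Y then tau x else sigma x].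

Definition subset_monotone (R : realType) (D X : finType)
  (w : passign D X -> R) : Prop :=
  forall (Y : {set X}) (tau1 tau2 sigma : passign D X),
    pa_on Y tau1 -> pa_on Y tau2 -> pa_on (~: Y) sigma ->
    w tau1 <= w tau2 ->
    w (pa_prod Y tau1 sigma) <= w (pa_prod Y tau2 sigma).

Definition maximal_wrt (R : realType) (D X : finType)
  (w : passign D X -> R) (RR : {set passign D X}) (tau : passign D X) : Prop :=
  tau \in RR /\ forall tau', tau' \in RR -> w tau' <= w tau.

Definition pa_join (D X : finType) (Y : {set X}) (RR SS : {set passign D X})
  : {set passign D X} :=
  [set pa_prod Y t s | t in RR, s in SS].

(* Since tau x sigma = sigma x tau, read over the complement of Y, subset
   monotonicity makes w of a product monotone in each factor separately.  So
   w (tau' x sigma') <= w (tau x sigma') <= w (tau x sigma). *)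
From HB Require Import structures.
From mathcomp Require Import all_boot all_order all_algebra.
From mathcomp Require Import reals.
Import Order.TTheory GRing.Theory Num.Theory.
Local Open Scope ring_scope.

Lemma setC_partition {T : finType} {Y Z : {set T}} :
  [disjoint Y & Z] -> Y :|: Z = [set: T] -> Z = ~: Y.
Proof.
move=> YZ0 YZT; apply/setP => x; rewrite inE.
have /setUP[xY | xZ] : x \in Y :|: Z by rewrite YZT inE.
  by rewrite xY (disjointFr YZ0 xY).
by rewrite xZ (disjointFl YZ0 xZ).
Qed.

Section PartialAssignments.
Variables (D X : finType).
Implicit Types (Y : {set X}) (tau sigma : passign D X).

Lemma pa_prodC Y tau sigma : pa_prod Y tau sigma = pa_prod (~: Y) sigma tau.
Proof. by apply/ffunP => x; rewrite !ffunE inE; case: (x \in Y). Qed.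

Lemma mem_pa_join {Y} {RR SS : {set passign D X}} {tau sigma} :
  tau \in RR -> sigma \in SS -> pa_prod Y tau sigma \in pa_join Y RR SS.
Proof. by move=> tauR sigmaS; apply/imset2P; exists tau sigma. Qed.

Variables (R : realType) (w : passign D X -> R).
Hypothesis w_mono : subset_monotone w.

Lemma subset_monotone_r Y tau sigma1 sigma2 :
  pa_on Y tau -> pa_on (~: Y) sigma1 -> pa_on (~: Y) sigma2 ->
  w sigma1 <= w sigma2 -> w (pa_prod Y tau sigma1) <= w (pa_prod Y tau sigma2).
Proof.
move=> tauY sigma1Y sigma2Y le12; rewrite !(pa_prodC Y tau).
have tauCCY : pa_on (~: ~: Y) tau by rewrite setCK.
exact: w_mono _ _ _ _ sigma1Y sigma2Y tauCCY le12.
Qed.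

Lemma maximal_pa_join Y (RR SS : {set passign D X}) tau sigma :
  (forall t, t \in RR -> pa_on Y t) -> (forall s, s \in SS -> pa_on (~: Y) s) ->
  maximal_wrt w RR tau -> maximal_wrt w SS sigma ->
  maximal_wrt w (pa_join Y RR SS) (pa_prod Y tau sigma).
Proof.
move=> onR onS [tauR tau_max] [sigmaS sigma_max].
split; first exact: mem_pa_join.
move=> _ /imset2P[tau' sigma' tau'R sigma'S ->].
apply: (le_trans (w_mono _ _ _ _ (onR _ tau'R) (onR _ tauR) (onS _ sigma'S) (tau_max _ tau'R))).
exact: subset_monotone_r (onR _ tauR) (onS _ sigma'S) (onS _ sigmaS) (sigma_max _ sigma'S).
Qed.

End PartialAssignments.

Theorem lemma2p2 (R : realType) (D X : finType) (Y Z : {set X})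
  (hdisj : [disjoint Y & Z]) (hcov : Y :|: Z = [set: X])
  (w : passign D X -> R) (hw : subset_monotone w)
  (RR SS : {set passign D X})
  (hR : forall t, t \in RR -> pa_on Y t)
  (hS : forall s, s \in SS -> pa_on Z s)
  (tau sigma : passign D X) :
  maximal_wrt w RR tau -> maximal_wrt w SS sigma ->
  maximal_wrt w (pa_join Y RR SS) (pa_prod Y tau sigma).
Proof.
rewrite (setC_partition hdisj hcov) in hS.
exact: maximal_pa_join.
Qed.
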